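(* There is a deterministic, non-contractive, strict online embedding of points arriving one by one from any metric space into HSTs such that, for every $n$, after $n$ points have arrived every pair $u,v$ of them satisfies $d_T(u,v)\le 2^n d(u,v)$; i.e., it has distortion $2^n$ on $n$ points, and it requires no prior knowledge of $n$.
   Context: For $\mu\ge1$, a $\mu$-HST is the metric on the leaves of a rooted tree with node weights $\varphi\ge0$ ($\varphi(v)=0$ iff $v$ is a leaf, $\varphi(v)\le\varphi(u)/\mu$ when $v$ is a child of $u$), with leaf distance $d_T(u,v)=\varphi(\mathrm{lca}(u,v))$; ''HSTs'' is the family of such metrics. A strict online embedding receives points of $(X,d)$ one at a time and upon arrival of each point (depending only on points so far) outputs an HST metric $d_T$ on all points arrived so far, such that distances between previously arrived points never change. Non-contractive means $d_T(u,v)\ge d(u,v)$ for all arrived $u,v$. *)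

From HB Require Import structures.
From mathcomp Require Import all_boot all_order all_algebra.
Set Implicit Arguments. Unset Strict Implicit. Unset Printing Implicit Defensive.
Import Order.TTheory GRing.Theory Num.Theory.
Local Open Scope ring_scope.

Definition is_metric (R : realDomainType) (X : Type) (d : X -> X -> R) : Prop :=
  (forall x y, 0 <= d x y) /\
  (forall x y, d x y = 0 <-> x = y) /\
  (forall x y, d x y = d y x) /\
  (forall x y z, d x z <= d x y + d y z).

Section Tree.
Variable V : finType.
Variable par : V -> V.     (* parent map; the root is its own parent *)
Variable root : V.

Definition ancestor (u v : V) : bool :=
  [exists k : 'I_#|V|.+1, iter k par v == u].

Definition is_lca (u v w : V) : bool :=
  [&& ancestor w u, ancestor w v &
      [forall z, (ancestor z u && ancestor z v) ==> ancestor z w]].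

Definition lca (u v : V) : V := odflt root [pick w | is_lca u v w].

Definition is_child (c u : V) : bool := (c != root) && (par c == u).

Definition is_leaf (v : V) : bool := [forall c, ~~ is_child c v].

Definition is_HST_tree (R : realFieldType) (mu : R) (phi : V -> R) : Prop :=
  par root = root /\
  (forall v, iter #|V| par v = root) /\
  (forall v, 0 <= phi v) /\
  (forall v, phi v = 0 <-> is_leaf v) /\
  (forall u v, is_child v u -> phi v <= phi u / mu).
End Tree.

(* dT, restricted to indices < n (the points arrived so far, indexed by
   arrival order), is a mu-HST metric: the points are mapped to leaves of a
   mu-HST and dT i j = phi (lca (leaf i) (leaf j)). *)
Definition mu_HST_metric (R : realFieldType) (mu : R) (n : nat)
    (dT : nat -> nat -> R) : Prop :=
  exists (V : finType) (par : V -> V) (root : V) (phi : V -> R) (leaf : nat -> V),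
    is_HST_tree par root mu phi /\
    (forall i, (i < n)%N -> is_leaf par root (leaf i)) /\
    (forall i j, (i < n)%N -> (j < n)%N ->
       dT i j = phi (lca par root (leaf i) (leaf j))).

Definition HST_metric (R : realFieldType) (n : nat) (dT : nat -> nat -> R) : Prop :=
  exists mu : R, 1 <= mu /\ mu_HST_metric mu n dT.

Definition distinct_prefix (X : Type) (x : nat -> X) (n : nat) : Prop :=
  forall i j, (i < n)%N -> (j < n)%N -> x i = x j -> i = j.

From HB Require Import structures.
From mathcomp Require Import all_boot all_order all_algebra.
From mathcomp Require Import reals.
From mathcomp Require Import zify lra.
Set Implicit Arguments. Unset Strict Implicit. Unset Printing Implicit Defensive.
Import Order.TTheory GRing.Theory Num.Theory.
Local Open Scope ring_scope.

(* When point m arrives, let j be its nearest predecessor and delta = d(x_m, x_j);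
   all old tree distances are kept and U(m, b) = max(2^(m+1) delta, U(j, b)) for
   b < m, i.e. x_m hangs below the ancestor of x_j at height 2^(m+1) delta.  Such a
   one-point extension of an ultrametric is again an ultrametric, and the triangle
   inequality through x_j, together with delta <= d(x_m, x_b), carries the
   invariant 2^m d <= (2^m - 1) U, U <= 2^m d over from m to m + 1 points; in
   particular d <= U <= 2^m d.  Finally every finite ultrametric is the leaf metric
   of a 1-HST whose internal nodes are the balls around the points, with radii the
   distinct values of U. *)

(** * Ultrametrics *)

Lemma ltnS_eqVlt m a : (a < m.+1)%N -> a = m \/ (a < m)%N.
Proof. by rewrite ltnS leq_eqVlt => /predU1P. Qed.

Section Ultrametric.
Variable R : realDomainType.

Definition ultrametric_on (n : nat) (U : nat -> nat -> R) : Prop :=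
  [/\ forall a b, (a < n)%N -> (b < n)%N -> U a b = U b a,
      forall a, (a < n)%N -> U a a = 0 &
      forall a b c, (a < n)%N -> (b < n)%N -> (c < n)%N ->
        U a c <= Num.max (U a b) (U b c)].

Lemma ultrametric_ge0 n U a b :
  ultrametric_on n U -> (a < n)%N -> (b < n)%N -> 0 <= U a b.
Proof.
case=> Usym U0 Uult alt blt.
by have := Uult a b a alt blt alt; rewrite U0 // [U b a]Usym // maxxx.
Qed.

Definition extend (U : nat -> nat -> R) (m : nat) (F : nat -> R) (a b : nat) : R :=
  if a == m then (if b == m then 0 else F b) else if b == m then F a else U a b.

Lemma extend_old U m F a b : (a < m)%N -> (b < m)%N -> extend U m F a b = U a b.
Proof. by move=> alt blt; rewrite /extend !ltn_eqF. Qed.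

Lemma extend_newl U m F b : (b < m)%N -> extend U m F m b = F b.
Proof. by move=> blt; rewrite /extend eqxx ltn_eqF. Qed.

Lemma extend_newr U m F a : (a < m)%N -> extend U m F a m = F a.
Proof. by move=> alt; rewrite /extend eqxx ltn_eqF. Qed.

Lemma extend_new U m F : extend U m F m m = 0.
Proof. by rewrite /extend eqxx. Qed.

(* The new point n is glued at height h above the old point j. *)
Lemma ultrametric_extend n U j h : ultrametric_on n U -> (j < n)%N ->
  ultrametric_on n.+1 (extend U n (fun b => Num.max h (U j b))).
Proof.
move=> Uum jlt; have [Usym U0 Uult] := Uum.
set F := fun b => _.
have F_ge0 b : (b < n)%N -> 0 <= F b.
  by move=> blt; rewrite le_max (ultrametric_ge0 Uum) ?orbT.
have U_le_F a b : (a < n)%N -> (b < n)%N -> U a b <= Num.max (F a) (F b).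
  move=> alt blt; apply: le_trans (Uult a j b alt jlt blt) _.
  by rewrite Usym // !ge_max !le_max !lexx !orbT.
have F_le_U a b : (a < n)%N -> (b < n)%N -> F a <= Num.max (U a b) (F b).
  move=> alt blt; rewrite [F a]/F ge_max; apply/andP; split.
    by rewrite !le_max lexx !orbT.
  apply: le_trans (Uult j b a jlt blt alt) _.
  by rewrite [U b a]Usym // ge_max !le_max !lexx !orbT.
split.
- move=> a b /ltnS_eqVlt[->|alt] /ltnS_eqVlt[->|blt];
    rewrite ?extend_new ?extend_newl ?extend_newr ?extend_old //.
  exact: Usym.
- by move=> a /ltnS_eqVlt[->|alt]; rewrite ?extend_new ?extend_old ?U0.
- move=> a b c /ltnS_eqVlt[->|alt] /ltnS_eqVlt[->|blt] /ltnS_eqVlt[->|clt];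
    rewrite ?extend_new ?extend_newl ?extend_newr ?extend_old ?maxxx //.
  + by rewrite le_max lexx orbT.
  + exact: F_ge0.
  + by rewrite maxC [U b c]Usym //; apply: F_le_U.
  + by rewrite le_max lexx.
  + exact: U_le_F.
  + exact: F_le_U.
  + exact: Uult.
Qed.

End Ultrametric.

(** * Finite ultrametrics are 1-HST metrics *)

Section UltrametricTree.
Variables (R : realFieldType) (n' m : nat) (U : nat -> nat -> R) (r : nat -> R).
Local Notation n := n'.+1.
Hypothesis U_ultra : ultrametric_on n U.
Hypothesis U_gt0 : forall a b, (a < n)%N -> (b < n)%N -> a != b -> 0 < U a b.
Hypothesis r_mono :
  {in [pred l | (l <= m)%N] &, {mono r : l l' / (l <= l')%N >-> l <= l'}}.
Hypothesis r0 : r 0 = 0.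
Hypothesis U_level :
  forall a b, (a < n)%N -> (b < n)%N -> exists2 l, (l <= m)%N & r l = U a b.

Lemma r_ge0 l : (l <= m)%N -> 0 <= r l.
Proof. by move=> lle; rewrite -r0 r_mono. Qed.

Lemma r_eq0 l : (l <= m)%N -> (r l == 0) = (l == 0%N).
Proof. by move=> lle; rewrite -r0 eq_le !r_mono // -eqn_leq. Qed.

Definition center a l := find (fun k => U a k <= r l) (iota 0 n).

Lemma has_center a l : (a < n)%N -> (l <= m)%N ->
  has (fun k => U a k <= r l) (iota 0 n).
Proof.
have [_ U0 _] := U_ultra.
by move=> alt lle; apply/hasP; exists a; rewrite ?mem_iota ?U0 ?r_ge0.
Qed.

Lemma center_lt a l : (a < n)%N -> (l <= m)%N -> (center a l < n)%N.
Proof. by move=> alt lle; rewrite -[n](size_iota 0) -has_find has_center. Qed.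

Lemma U_center a l : (a < n)%N -> (l <= m)%N -> U a (center a l) <= r l.
Proof.
move=> alt lle; have := nth_find 0%N (has_center alt lle).
by rewrite nth_iota ?center_lt.
Qed.

Lemma center_le a l k : (k < n)%N -> U a k <= r l -> (center a l <= k)%N.
Proof.
move=> klt Uk; rewrite leqNgt; apply/negP => /(before_find 0%N).
by rewrite nth_iota // Uk.
Qed.

Lemma eq_center a b l : (a < n)%N -> (b < n)%N -> (l <= m)%N ->
  (center a l == center b l) = (U a b <= r l).
Proof.
have [Usym _ Uult] := U_ultra.
move=> alt blt lle; apply/eqP/idP => [E | Uab].
  apply: le_trans (Uult a (center a l) b alt (center_lt alt lle) blt) _.
  by rewrite ge_max U_center // E Usym ?U_center ?center_lt.
apply: eq_in_find => k; rewrite mem_iota => /andP[_ klt].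
apply/idP/idP => Uk.
  by apply: le_trans (Uult b a k blt alt klt) _; rewrite ge_max Usym ?Uab.
by apply: le_trans (Uult a b k alt blt klt) _; rewrite ge_max Uab.
Qed.

Lemma center_center a l l' : (a < n)%N -> (l <= l')%N -> (l' <= m)%N ->
  center (center a l) l' = center a l'.
Proof.
have [Usym _ _] := U_ultra.
move=> alt ll' l'le; have lle := leq_trans ll' l'le.
apply/eqP; rewrite eq_center ?center_lt // Usym ?center_lt //.
by apply: le_trans (U_center alt lle) _; rewrite r_mono.
Qed.

Lemma center0 a : (a < n)%N -> center a 0 = a.
Proof.
move=> alt; apply/eqP; rewrite eq_sym; apply/negPn/negP => ne.
have := U_gt0 alt (center_lt alt (leq0n m)) ne.
by rewrite ltNge -r0 U_center.
Qed.

Lemma center_top a : (a < n)%N -> center a m = 0%N.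
Proof.
move=> alt; apply/eqP; rewrite -leqn0; apply: center_le => //.
by have [l lle <-] := U_level alt (ltn0Sn n'); rewrite r_mono ?inE ?leqnn.
Qed.

(* The vertex (c, l) stands for the ball of radius r l around its least point c;
   pairs (a, l) with a not the least point of its ball are extra leaves of
   weight 0. *)
Definition vertex := ('I_n * 'I_m.+1)%type.
Definition ball a l : vertex := (inord (center a l), inord l).
Definition is_center (v : vertex) := center v.1 v.2 == v.1.
Definition tree_root := ball 0 m.
Definition tree_parent (v : vertex) := ball v.1 (minn v.2.+1 m).
Definition weight (v : vertex) := if is_center v then r v.2 else 0.

Lemma ball_fst a l : (a < n)%N -> (l <= m)%N -> (ball a l).1 = center a l :> nat.
Proof. by move=> alt lle; rewrite /= inordK ?center_lt. Qed.

Lemma ball_snd a l : (l <= m)%N -> (ball a l).2 = l :> nat.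
Proof. by move=> lle; rewrite /= inordK. Qed.

Lemma ball_inj a b l l' : (a < n)%N -> (b < n)%N -> (l <= m)%N -> (l' <= m)%N ->
  ball a l = ball b l' -> l = l' /\ center a l = center b l'.
Proof.
move=> alt blt lle l'le E; split.
  by rewrite -(ball_snd a lle) -(ball_snd b l'le) E.
by rewrite -(ball_fst alt lle) -(ball_fst blt l'le) E.
Qed.

Lemma ball_center a l l' : (a < n)%N -> (l <= l')%N -> (l' <= m)%N ->
  ball (center a l) l' = ball a l'.
Proof. by move=> alt ll' l'le; rewrite /ball center_center. Qed.

Lemma ball_top a : (a < n)%N -> ball a m = tree_root.
Proof. by move=> alt; rewrite /tree_root /ball !center_top. Qed.

Lemma ballE v : is_center v -> ball v.1 v.2 = v.
Proof. by case: v => a l /= /eqP E; rewrite /ball E !inord_val. Qed.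

Lemma is_center_ball a l : (a < n)%N -> (l <= m)%N -> is_center (ball a l).
Proof.
by move=> alt lle; rewrite /is_center ball_fst // ball_snd // center_center.
Qed.

Lemma weight_ball a l : (a < n)%N -> (l <= m)%N -> weight (ball a l) = r l.
Proof. by move=> alt lle; rewrite /weight is_center_ball // ball_snd. Qed.

Lemma parent_ball a l : (a < n)%N -> (l <= m)%N ->
  tree_parent (ball a l) = ball a (minn l.+1 m).
Proof.
move=> alt lle; rewrite /tree_parent ball_fst // ball_snd // ball_center //.
  by rewrite leq_min leqnSn.
exact: geq_minr.
Qed.

Lemma iter_parent_ball k a l : (a < n)%N -> (l <= m)%N ->
  iter k tree_parent (ball a l) = ball a (minn (l + k) m).
Proof.
move=> alt lle; elim: k => [|k IHk]; first by rewrite addn0 (minn_idPl lle).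
rewrite iterS IHk parent_ball ?geq_minr //; congr ball; lia.
Qed.

Lemma iter_parent_root v : iter #|{: vertex}| tree_parent v = tree_root.
Proof.
have N_gt : (m < #|{: vertex}|)%N by rewrite card_prod !card_ord mulSn; lia.
rewrite -(prednK (leq_ltn_trans (leq0n m) N_gt)) iterSr.
rewrite iter_parent_ball ?geq_minr //.
by rewrite (_ : minn _ _ = m) ?ball_top //; lia.
Qed.

Lemma ancestor_ballP w a l : (a < n)%N -> (l <= m)%N ->
  reflect (exists2 l', (l <= l' <= m)%N & w = ball a l')
          (ancestor tree_parent w (ball a l)).
Proof.
move=> alt lle; apply: (iffP existsP) => [[k /eqP <-] | [l' /andP[ll' l'le] ->]].
  by rewrite iter_parent_ball //; exists (minn (l + k) m) => //; lia.
have klt : (l' - l < #|{: vertex}|.+1)%N by rewrite card_prod !card_ord mulSn; lia.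
by exists (Ordinal klt); rewrite iter_parent_ball //=; apply/eqP; congr ball; lia.
Qed.

Lemma is_leafE v :
  is_leaf tree_parent tree_root v = ~~ is_center v || (v.2 == 0%N :> nat).
Proof.
have v1lt : (v.1 < n)%N := ltn_ord v.1.
have v2le : (v.2 <= m)%N := ltn_ord v.2.
apply/idP/idP => [leaf | ].
  apply/contraT; rewrite negb_or negbK => /andP[cv v2_gt0].
  move/forallP: leaf => /(_ (ball v.1 v.2.-1)); rewrite /is_child negb_and negbK.
  case/orP => [/eqP /ball_inj | ]; first by case=> //; lia.
  rewrite parent_ball //; last by lia.
  by rewrite (_ : minn _ _ = v.2) ?ballE ?eqxx //; lia.
case/orP => [ncv | /eqP v2_0]; apply/forallP => c; apply/negP => /andP[c_nroot /eqP pc].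
  by move: ncv; rewrite -pc /tree_parent is_center_ball ?geq_minr.
have c1lt : (c.1 < n)%N := ltn_ord c.1.
have c2le : (c.2 <= m)%N := ltn_ord c.2.
have m0 : m = 0%N by move: v2_0; rewrite -pc /tree_parent ball_snd ?geq_minr; lia.
have c2_0 : c.2 = 0%N :> nat by lia.
have cc : is_center c by rewrite /is_center c2_0 center0.
by move: c_nroot; rewrite -(ballE cc) c2_0 -m0 ball_top // eqxx.
Qed.

Lemma weight_eq0 v : (weight v == 0) = ~~ is_center v || (v.2 == 0%N :> nat).
Proof.
by rewrite /weight; case: ifP => _ /=; rewrite ?eqxx // (r_eq0 (ltn_ord v.2)).
Qed.

Lemma weight_bounds v : 0 <= weight v <= r v.2.
Proof.
have r_v2 := r_ge0 (ltn_ord v.2).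
by rewrite /weight; case: ifP => _; rewrite ?r_v2 ?lexx.
Qed.

Lemma tree_is_HST : is_HST_tree tree_parent tree_root 1 weight.
Proof.
split; [|split; [exact: iter_parent_root|split; [|split]]].
- by rewrite /tree_root parent_ball // (_ : minn _ _ = m) //; lia.
- by move=> v; case/andP: (weight_bounds v).
- by move=> v; rewrite is_leafE -weight_eq0; apply: rwP eqP.
- move=> _ c /andP[_ /eqP <-]; rewrite divr1 weight_ball ?geq_minr //.
  have c2le : (c.2 <= m)%N := ltn_ord c.2.
  apply: le_trans (_ : _ <= r c.2) _; first by case/andP: (weight_bounds c).
  by rewrite r_mono ?inE ?geq_minr // leq_min leqnSn.
Qed.

Lemma lca_ball i j L : (i < n)%N -> (j < n)%N -> (L <= m)%N -> r L = U i j ->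
  lca tree_parent tree_root (ball i 0) (ball j 0) = ball i L.
Proof.
move=> ilt jlt Lle rL.
have anc0 a w : (a < n)%N -> ancestor tree_parent w (ball a 0) ->
    exists2 l, (l <= m)%N & w = ball a l.
  by move=> alt /(ancestor_ballP _ alt (leq0n m))[l /andP[_ lle] ->]; exists l.
have same_ball l : (l <= m)%N -> ball i l = ball j l <-> (L <= l)%N.
  move=> lle; rewrite -r_mono ?inE // rL -eq_center //.
  split=> [/ball_inj[] // _ -> // | /eqP E]; last by rewrite /ball E.
have common w : ancestor tree_parent w (ball i 0) && ancestor tree_parent w (ball j 0)
    <-> exists2 l, (L <= l <= m)%N & w = ball i l.
  split=> [/andP[/(anc0 i _ ilt)[l1 l1le ->] /(anc0 j _ jlt)[l2 l2le E]] | ].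
    have [l12 _] := ball_inj ilt jlt l1le l2le E.
    by exists l1; rewrite // l1le andbT; apply/same_ball; rewrite // E l12.
  case=> l /andP[Ll lle] ->; apply/andP; split.
    by apply/(ancestor_ballP _ ilt (leq0n m)); exists l.
  by apply/(ancestor_ballP _ jlt (leq0n m)); exists l => //; apply/same_ball.
have iL_common : ancestor tree_parent (ball i L) (ball i 0)
    && ancestor tree_parent (ball i L) (ball j 0).
  by apply/common; exists L; rewrite ?leqnn.
have lca_iL : is_lca tree_parent (ball i 0) (ball j 0) (ball i L).
  case/andP: iL_common => iL_i iL_j; apply/and3P; split => //.
  apply/forallP => z; apply/implyP => /common[l /andP[Ll lle] ->].
  by apply/(ancestor_ballP _ ilt Lle); exists l; rewrite ?Ll.
rewrite /lca; case: pickP => [w | /(_ (ball i L))]; last by rewrite lca_iL.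
case/and3P=> wi wj /forallP/(_ (ball i L))/implyP/(_ iL_common).
have [l /andP[Ll lle] ->] := (common w).1 (introT andP (conj wi wj)).
move=> /(ancestor_ballP _ ilt lle)[l' /andP[ll' l'le]].
by case/(ball_inj ilt ilt Lle l'le) => Ll' _; congr ball; lia.
Qed.

Lemma ultrametric_mu_HST : mu_HST_metric 1 n U.
Proof.
exists vertex, tree_parent, tree_root, weight, (fun i => ball i 0).
split; [exact: tree_is_HST|split].
- by move=> i ilt; rewrite is_leafE ball_snd ?eqxx ?orbT.
- move=> i j ilt jlt; have [L Lle rL] := U_level ilt jlt.
  by rewrite (lca_ball ilt jlt Lle rL) weight_ball.
Qed.

End UltrametricTree.

Lemma ultrametric_levels (R : realFieldType) n (U : nat -> nat -> R) :
  ultrametric_on n.+1 U ->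
  exists m (r : nat -> R),
    [/\ {in [pred l | (l <= m)%N] &, {mono r : l l' / (l <= l')%N >-> l <= l'}},
        r 0 = 0 &
        forall a b, (a < n.+1)%N -> (b < n.+1)%N ->
          exists2 l, (l <= m)%N & r l = U a b].
Proof.
move=> Uum; have [_ U0 _] := Uum.
set s := sort <=%R (undup [seq U a b | a <- iota 0 n.+1, b <- iota 0 n.+1]).
have U_in a b : (a < n.+1)%N -> (b < n.+1)%N -> U a b \in s.
  move=> alt blt; rewrite mem_sort mem_undup.
  by apply/allpairsP; exists (a, b); rewrite !mem_iota.
have s_ge0 x : x \in s -> 0 <= x.
  rewrite mem_sort mem_undup => /allpairsP[[a b] []].
  by rewrite !mem_iota => /andP[_ alt] /andP[_ blt] ->; apply: (ultrametric_ge0 Uum).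
have s_lt : sorted <%R s.
  by rewrite lt_sorted_uniq_le sort_uniq undup_uniq sort_sorted //; apply: le_total.
have s_mono := lt_sorted_leq_nth 0 s_lt.
have s0 : 0 \in s by rewrite -(U0 0%N) ?U_in.
have s_gt0 : (0 < size s)%N by case: (s) s0.
exists (size s).-1, (nth 0 s); split.
- move=> l l' lle l'le; rewrite !inE /= in lle l'le.
  by apply: s_mono; rewrite inE /= -(prednK s_gt0).
- apply/eqP; rewrite eq_le s_ge0 ?mem_nth // andbT.
  by rewrite -{2}(nth_index 0 s0) s_mono ?inE ?index_mem.
- move=> a b alt blt; exists (index (U a b) s); last exact/nth_index/U_in.
  by rewrite -ltnS prednK // index_mem U_in.
Qed.

Lemma mu_HST_metric0 (R : realFieldType) (mu : R) (dT : nat -> nat -> R) :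
  mu_HST_metric mu 0 dT.
Proof.
exists unit, (fun _ => tt), tt, (fun _ => 0), (fun _ => tt).
split; last by split.
split=> //; split=> [[]|]; first by rewrite card_unit.
split=> [_|]; first exact: lexx.
split=> [[]|[] [] /andP[]] //.
by split=> // _; apply/forallP => -[].
Qed.

Lemma eq_mu_HST_metric (R : realFieldType) (mu : R) n (U V : nat -> nat -> R) :
  (forall i j, (i < n)%N -> (j < n)%N -> U i j = V i j) ->
  mu_HST_metric mu n U -> mu_HST_metric mu n V.
Proof.
move=> UV [T [par [root [phi [leaf [T_HST [leaves U_lca]]]]]]].
exists T, par, root, phi, leaf; do !split=> //.
by move=> i j ilt jlt; rewrite -UV ?U_lca.
Qed.

Lemma ultrametric_HST (R : realFieldType) n (U : nat -> nat -> R) :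
  ultrametric_on n U ->
  (forall a b, (a < n)%N -> (b < n)%N -> a != b -> 0 < U a b) ->
  mu_HST_metric 1 n U.
Proof.
case: n => [|n] Uum U_gt0; first exact: mu_HST_metric0.
have [m [r [r_mono r0 U_level]]] := ultrametric_levels Uum.
exact: ultrametric_mu_HST Uum U_gt0 r_mono r0 U_level.
Qed.

(** * The online embedding *)

Section ArgMin.
Variables (R : realDomainType) (f : nat -> R).

Fixpoint argmin_upto k : nat :=
  if k is k'.+1 then
    let j := argmin_upto k' in if f k < f j then k else j
  else 0.

Lemma argmin_upto_le k : (argmin_upto k <= k)%N.
Proof. by elim: k => //= k IHk; case: ifP => // _; apply: leqW. Qed.

Lemma argmin_upto_min k i : (i <= k)%N -> f (argmin_upto k) <= f i.
Proof.
elim: k i => [|k IHk] i; first by rewrite leqn0 => /eqP ->.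
rewrite leq_eqVlt ltnS /=; case: ifP => [lt_kj | /negbT]; rewrite -?leNgt.
  by case/predU1P => [-> // | ilek]; apply: le_trans (ltW lt_kj) (IHk i ilek).
by move=> le_jk /predU1P[-> // | ilek]; apply: IHk.
Qed.

End ArgMin.

Lemma eq_argmin_upto (R : realDomainType) (f g : nat -> R) k :
  (forall i, (i <= k)%N -> f i = g i) -> argmin_upto f k = argmin_upto g k.
Proof.
elim: k => [//|k IHk] fg /=; rewrite IHk => [|i ilek]; last exact/fg/leqW.
by rewrite !fg // leqW ?argmin_upto_le.
Qed.

Section Sandwich.
Variable R : realFieldType.

Definition sandwiched (K D V : R) := K * D <= (K - 1) * V /\ V <= K * D.

Lemma sandwiched_le K D V : 1 <= K -> 0 <= V -> sandwiched K D V -> D <= V.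
Proof. by move=> K_ge1 V_ge0 [lo _]; nra. Qed.

Lemma sandwiched_double K D V : 1 <= K -> 0 <= D -> 0 <= V ->
  sandwiched K D V -> sandwiched (2 * K) D V.
Proof. by move=> K_ge1 D_ge0 V_ge0 [lo up]; split; nra. Qed.

(* A new point at distance D from b and delta <= D from its nearest
   neighbour j, which is at distance Dj from b. *)
Lemma sandwiched_glue K D delta Dj Uj : 1 <= K ->
  0 <= delta <= D -> D <= delta + Dj -> Dj <= delta + D ->
  sandwiched K Dj Uj -> sandwiched (2 * K) D (Num.max (2 * K * delta) Uj).
Proof.
move=> K_ge1 /andP[delta_ge0 delta_le] D_le Dj_le [lo up].
rewrite /sandwiched ge_max; split; last by apply/andP; split; nra.
have : 2 * K * delta <= Num.max (2 * K * delta) Uj by rewrite le_max lexx.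
have : Uj <= Num.max (2 * K * delta) Uj by rewrite le_max lexx orbT.
nra.
Qed.

End Sandwich.

Section OnlineEmbedding.
Variables (R : realFieldType) (X : Type) (d : X -> X -> R).

Definition nearest (p : nat -> X) m := argmin_upto (fun i => d (p m) (p i)) m.-1.

Lemma nearest_le p m : (nearest p m <= m.-1)%N.
Proof. exact: argmin_upto_le. Qed.

Lemma nearest_min p m b : (b < m)%N -> d (p m) (p (nearest p m)) <= d (p m) (p b).
Proof. by move=> blt; apply: (argmin_upto_min (fun i => d (p m) (p i))); lia. Qed.

Lemma eq_nearest p q m : (forall i, (i <= m)%N -> p i = q i) -> nearest p m = nearest q m.
Proof.
by move=> pq; apply: eq_argmin_upto => i ile; rewrite !pq ?(leq_trans ile) ?leq_pred.
Qed.

Fixpoint embed (p : nat -> X) m : nat -> nat -> R :=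
  if m is m'.+1 then
    let j := nearest p m' in
    extend (embed p m') m' (fun b => Num.max (2 ^+ m * d (p m') (p j)) (embed p m' j b))
  else fun _ _ => 0.

Lemma embed_prefix p m a b : (a < m)%N -> (b < m)%N -> embed p m.+1 a b = embed p m a b.
Proof. exact: extend_old. Qed.

Lemma eq_embed p q m : (forall i, (i < m)%N -> p i = q i) -> embed p m =2 embed q m.
Proof.
elim: m => [//|m IHm] pq a b /=.
have jlt : (nearest q m < m.+1)%N by rewrite ltnS (leq_trans (nearest_le q m)) ?leq_pred.
rewrite /extend (eq_nearest pq) !(IHm (fun i ilt => pq i (leqW ilt))) !pq //.
Qed.

Lemma embed_ultrametric p m : ultrametric_on m (embed p m).
Proof.
elim: m => [|[|m] IHm]; first by split.
  have lt1 a : (a < 1)%N -> a = 0%N by case: a.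
  by split=> [a b /lt1-> /lt1->|a /lt1->|a b c /lt1-> /lt1-> /lt1->] //=;
    rewrite extend_new ?maxxx.
exact/ultrametric_extend/(leq_ltn_trans (nearest_le p m.+1)).
Qed.

Hypothesis d_metric : is_metric d.

Let d_ge0 x y : 0 <= d x y. Proof. by case: d_metric. Qed.
Let d_sym x y : d x y = d y x. Proof. by case: d_metric => _ [_ []]. Qed.
Let d_triangle x y z : d x z <= d x y + d y z.
Proof. by case: d_metric => _ [_ [_]]. Qed.
Let d_xx x : d x x = 0. Proof. by case: d_metric => _ [/(_ x x) [_ ->]]. Qed.

Lemma embed_sandwiched p m a b : (a < m)%N -> (b < m)%N ->
  sandwiched (2 ^+ m) (d (p a) (p b)) (embed p m a b).
Proof.
elim: m a b => // m IHm.
have K_ge1 : 1 <= 2 ^+ m :> R by rewrite exprn_ege1 // ler1n.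
set j := nearest p m.
have new b : (b < m)%N -> sandwiched (2 ^+ m.+1) (d (p m) (p b)) (embed p m.+1 m b).
  move=> blt; have jlt : (j < m)%N by have := nearest_le p m; lia.
  rewrite /= extend_newl // exprS.
  apply: sandwiched_glue K_ge1 _ _ _ (IHm _ _ jlt blt).
  - by rewrite d_ge0 nearest_min.
  - exact: d_triangle.
  - by rewrite [d (p m) _]d_sym; apply: d_triangle.
have Um := embed_ultrametric p m.+1; have [Usym U0 _] := Um.
move=> a b /ltnS_eqVlt[->|alt] /ltnS_eqVlt[->|blt].
- by rewrite U0 // d_xx /sandwiched !mulr0.
- exact: new.
- by rewrite (Usym _ _ (leqW alt) (ltnSn m)) d_sym; apply: new.
rewrite embed_prefix // exprS.
apply: sandwiched_double K_ge1 (d_ge0 _ _) _ (IHm _ _ alt blt).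
exact: (ultrametric_ge0 (embed_ultrametric p m)).
Qed.

Lemma embed_dist_bounds p m a b : (a < m)%N -> (b < m)%N ->
  d (p a) (p b) <= embed p m a b <= 2 ^+ m * d (p a) (p b).
Proof.
move=> alt blt; have bnd := embed_sandwiched p alt blt.
rewrite (sandwiched_le _ _ bnd) ?(ultrametric_ge0 (embed_ultrametric p m)) //=.
  by case: bnd.
by rewrite exprn_ege1 // ler1n.
Qed.

Lemma embed_HST p m : distinct_prefix p m -> mu_HST_metric 1 m (embed p m).
Proof.
move=> p_inj; apply: ultrametric_HST (embed_ultrametric p m) _ => a b alt blt ab.
have [_ [d_eq0 _]] := d_metric.
have d_gt0 : 0 < d (p a) (p b).
  by rewrite lt_def d_ge0 andbT; apply: contra ab => /eqP/d_eq0/(p_inj a b alt blt)/eqP.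
by apply: lt_le_trans d_gt0 _; case/andP: (embed_dist_bounds p alt blt).
Qed.

End OnlineEmbedding.

(* X may be empty, so the first arrived point serves as the default of nth. *)
Definition online_embedding (R : realFieldType) (X : Type) (d : X -> X -> R)
    (s : seq X) : nat -> nat -> R :=
  if s is a :: _ then embed d (nth a s) (size s) else fun _ _ => 0.

Lemma online_embedding_nth (R : realFieldType) (X : Type) (d : X -> X -> R) a s :
  online_embedding d s =2 embed d (nth a s) (size s).
Proof. by case: s => [//|b s]; apply: eq_embed => i; apply: set_nth_default. Qed.

Lemma online_embedding_mkseq (R : realFieldType) (X : Type) (d : X -> X -> R) x n :
  online_embedding d (mkseq x n) =2 embed d x n.
Proof.
case: n => [//|n] i j; rewrite (online_embedding_nth _ (x 0)) size_mkseq.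
by apply: eq_embed => k klt; rewrite nth_mkseq.
Qed.

Theorem mainTheorem15 (R : realType) :
  exists A : forall X : Type, (X -> X -> R) -> seq X -> nat -> nat -> R,
  forall (X : Type) (d : X -> X -> R), is_metric d ->
  forall x : nat -> X,
    (forall n, distinct_prefix x n -> HST_metric n (A X d (mkseq x n))) /\
    (forall n, distinct_prefix x n.+1 -> forall i j, (i < n)%N -> (j < n)%N ->
        A X d (mkseq x n.+1) i j = A X d (mkseq x n) i j) /\
    (forall n, distinct_prefix x n -> forall i j, (i < n)%N -> (j < n)%N ->
        d (x i) (x j) <= A X d (mkseq x n) i j /\
        A X d (mkseq x n) i j <= 2 ^+ n * d (x i) (x j)).
Proof.
exists (@online_embedding R) => X d d_metric x; split; [|split] => n.
- move=> x_inj; exists 1; split=> //.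
  apply: eq_mu_HST_metric (embed_HST d_metric x_inj) => i j _ _.
  by rewrite online_embedding_mkseq.
- by move=> _ i j ilt jlt; rewrite !online_embedding_mkseq embed_prefix.
- move=> _ i j ilt jlt; rewrite online_embedding_mkseq.
  exact/andP/(embed_dist_bounds d_metric).
Qed.
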